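(* Let $n,d\in\mathbb{N}$, and let $\psi_1:\mathbb{R}^d\to\mathbb{C}$ and $\psi_2:\mathbb{R}^n\to\mathbb{C}$ be characteristic exponents of Lévy processes with Lévy triplets $(b_1,Q_1,\nu_1)$ and $(b_2,Q_2,\nu_2)$. Then \[ \{(x,y)\in\mathbb{R}^d\times\mathbb{R}^n\mid\psi_1(x)+\psi_2(y)=0\}=\{(x,y)\in\mathbb{R}^d\times\mathbb{R}^n\mid \psi_1(x)\in i\mathbb{R},\ \psi_2(y)\in i\mathbb{R},\ b_1^x+b_2^y=0\}. \]
   Context: A characteristic exponent with Lévy triplet $(b,Q,\nu)$ on $\mathbb{R}^k$ is $\psi(\xi)=-ib\cdot\xi+\tfrac12\xi\cdot Q\xi+\int_{0<|z|<1}(1-e^{iz\cdot\xi}+iz\cdot\xi)\nu(dz)+\int_{|z|\ge1}(1-e^{iz\cdot\xi})\nu(dz)$. For such a triplet and $x\in\mathbb{R}^k$, define $b^x:=x\cdot b+\int x\cdot z\big(\mathbf 1_{(0,1)}(|x\cdot z|)-\mathbf 1_{(0,1)}(|z|)\big)\nu(dz)$ (the drift of the one-dimensional Lévy process $x\cdot X_t$). Here $b_1^x$ is built from $(b_1,\nu_1)$ and $b_2^y$ from $(b_2,\nu_2)$. *)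

From HB Require Import structures.
From mathcomp Require Import all_boot all_order all_algebra.
From mathcomp Require Import all_classical all_reals all_analysis.
From mathcomp Require Import complex.

Set Implicit Arguments.
Unset Strict Implicit.
Unset Printing Implicit Defensive.

Import Order.TTheory GRing.Theory Num.Theory.
Import numFieldNormedType.Exports.
Local Open Scope classical_set_scope.
Local Open Scope ring_scope.

(* R^k is represented by row vectors 'rV[R]_k, equipped with its Borel
   sigma-algebra (generated by the open sets of its usual topology). *)
Definition vecR (R : realType) (k : nat) :=
  g_sigma_algebraType (@open 'rV[R]_k).

Definition dotR (R : realType) (k : nat) (x z : 'rV[R]_k) : R :=
  \sum_(i < k) x ord0 i * z ord0 i.

Definition enorm (R : realType) (k : nat) (z : 'rV[R]_k) : R :=
  Num.sqrt (dotR z z).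

Definition levy_triplet (R : realType) (k : nat) (b : 'rV[R]_k) (Q : 'M[R]_k)
  (nu : {measure set (vecR R k) -> \bar R}) : Prop :=
  [/\ Q^T = Q,
      (forall v : 'rV[R]_k, 0 <= dotR v (v *m Q)),
      nu [set (0 : 'rV[R]_k)] = 0%E &
      (\int[nu]_(z in [set: vecR R k]) (Num.min 1 (enorm z ^+ 2))%:E < +oo)%E].

(* The characteristic exponent psi(xi) of the triplet (b, Q, nu):
   psi(xi) = -i b.xi + 1/2 xi.Q xi
             + int_{0<|z|<1} (1 - e^{i z.xi} + i z.xi) nu(dz)
             + int_{|z|>=1} (1 - e^{i z.xi}) nu(dz),
   written out via its real and imaginary parts. *)
Definition small_jumps (R : realType) (k : nat) : set (vecR R k) :=
  [set z | 0 < enorm z < 1].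
Definition big_jumps (R : realType) (k : nat) : set (vecR R k) :=
  [set z | 1 <= enorm z].

Definition char_exp (R : realType) (k : nat) (b : 'rV[R]_k) (Q : 'M[R]_k)
  (nu : {measure set (vecR R k) -> \bar R}) (xi : 'rV[R]_k) : complex.complex R :=
  complex.Complex
    (2^-1 * dotR xi (xi *m Q)
      + Rintegral nu (@small_jumps R k) (fun z => 1 - cos (dotR z xi))
      + Rintegral nu (@big_jumps R k) (fun z => 1 - cos (dotR z xi)))
    (- dotR b xi
      + Rintegral nu (@small_jumps R k) (fun z => dotR z xi - sin (dotR z xi))
      - Rintegral nu (@big_jumps R k) (fun z => sin (dotR z xi))).

Definition drift_dir (R : realType) (k : nat) (b : 'rV[R]_k)
  (nu : {measure set (vecR R k) -> \bar R}) (x : 'rV[R]_k) : R :=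
  dotR x b + Rintegral nu [set: vecR R k]
    (fun z => dotR x z * (((0 < Num.norm (dotR x z))%R && (Num.norm (dotR x z) < 1)%R)%:R - ((0 < enorm z)%R && (enorm z < 1)%R)%:R)).

From HB Require Import structures.
From mathcomp Require Import all_boot all_order all_algebra.
From mathcomp Require Import all_classical all_reals all_analysis.
From mathcomp Require Import complex measurable_realfun.
From mathcomp Require Import ring lra.

Set Implicit Arguments.
Unset Strict Implicit.
Unset Printing Implicit Defensive.

Import Order.TTheory GRing.Theory Num.Theory.
Import numFieldNormedType.Exports.
Local Open Scope classical_set_scope.
Local Open Scope ring_scope.

(* The real part of a characteristic exponent is nonnegative: it is the Gaussian
   quadratic form plus integrals of 1 - cos (z.x) >= 0, which are finite since
   1 - cos (z.x) <= (2 + |x|^2) min(1, |z|^2). So psi1(x) + psi2(y) = 0 forces both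
   real parts to vanish, hence cos (z.x) = 1 for nu-almost every z (nu{0} = 0).
   For such z, sin (z.x) = 0 and |z.x| never lies in (0,1), so the imaginary part
   collapses to Im psi(x) = -b^x and the remaining condition is b1^x + b2^y = 0. *)

Lemma sum_mul_sqr_le (R : realFieldType) (I : finType) (a b : I -> R) :
  (\sum_i a i * b i) ^+ 2 <= (\sum_i a i ^+ 2) * (\sum_i b i ^+ 2).
Proof.
set P := \sum_i \sum_j a i ^+ 2 * b j ^+ 2.
set S := \sum_i \sum_j (a i * b i) * (a j * b j).
have P_sym : \sum_i \sum_j a j ^+ 2 * b i ^+ 2 = P by rewrite /P exchange_big.
have lagrange : \sum_i \sum_j (a i * b j - a j * b i) ^+ 2 = P + P - 2 * S.
  rewrite -[X in _ = _ + X - _]P_sym /P /S mulr_sumr -!big_split -sumrB /=.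
  apply: eq_bigr => i _; rewrite mulr_sumr -!big_split -sumrB /=.
  by apply: eq_bigr => j _; ring.
have : 0 <= \sum_i \sum_j (a i * b j - a j * b i) ^+ 2.
  by apply: sumr_ge0 => i _; apply: sumr_ge0 => j _; exact: sqr_ge0.
rewrite lagrange /P /S -!big_distrlr /= -expr2; lra.
Qed.

Section dotR.
Variables (R : realType) (k : nat).
Implicit Types x z : 'rV[R]_k.

Lemma dotRC x z : dotR x z = dotR z x.
Proof. by apply: eq_bigr => i _; rewrite mulrC. Qed.

Lemma dotRR_ge0 z : 0 <= dotR z z.
Proof. by apply: sumr_ge0 => i _; rewrite -expr2 sqr_ge0. Qed.

Lemma dotRR_eq0 z : (dotR z z == 0) = (z == 0).
Proof.
apply/idP/eqP => [|->]; last by rewrite /dotR big1 // => i _; rewrite mxE mulr0.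
rewrite /dotR psumr_eq0 => [/allP z0|i _]; last by rewrite -expr2 sqr_ge0.
apply/rowP => i; rewrite mxE.
by have /z0 := mem_index_enum i; rewrite mulf_eq0 orbb => /eqP.
Qed.

Lemma dotR_sqr_le x z : dotR z x ^+ 2 <= dotR z z * dotR x x.
Proof.
rewrite /dotR; under [X in _ <= X * _]eq_bigr do rewrite -expr2.
under [X in _ <= _ * X]eq_bigr do rewrite -expr2.
exact: sum_mul_sqr_le.
Qed.

Lemma enorm_sqr z : enorm z ^+ 2 = dotR z z.
Proof. by rewrite sqr_sqrtr // dotRR_ge0. Qed.

Lemma enorm_eq0 z : (enorm z == 0) = (z == 0).
Proof. by rewrite sqrtr_eq0 -dotRR_eq0 eq_le dotRR_ge0 andbT. Qed.

Lemma enorm_gt0 z : (0 < enorm z) = (z != 0).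
Proof. by rewrite lt_neqAle sqrtr_ge0 andbT eq_sym enorm_eq0. Qed.

Lemma small_big_jumpsU : @small_jumps R k `|` @big_jumps R k = [set~ 0].
Proof.
apply/seteqP; split => z /=.
  case=> [/andP[z0 _]|z1]; apply/eqP; rewrite -enorm_gt0 //.
  exact: lt_le_trans ltr01 z1.
move=> /eqP z0; have [z1|] := ltP (enorm z) 1; [left|by right].
by rewrite /small_jumps /= enorm_gt0 z0 z1.
Qed.

End dotR.

Section trigonometry.
Variable R : realType.
Implicit Types t : R.

Lemma normr_sin_le t : `|sin t| <= `|t|.
Proof.
wlog t0 : t / 0 <= t.
  move=> le_sin; have [/le_sin//|t0] := leP 0 t.
  by rewrite -normrN -sinN -(normrN t) le_sin // oppr_ge0 ltW.
have [c _] := MVT_segment t0 (fun u _ => is_derive_sin u)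
  (continuous_subspaceT (@continuous_sin R)).
rewrite sin0 !subr0 => ->.
by rewrite normrM (ger0_norm t0) ler_piMl ?cos_max.
Qed.

Lemma one_sub_cos t : 1 - cos t = (sin (t / 2) ^+ 2) *+ 2.
Proof. by rewrite [X in cos X]splitr cosD -!expr2 cos2sin2 mulr2n; ring. Qed.

Lemma one_sub_cos_le_sqr t : 1 - cos t <= t ^+ 2.
Proof.
have sin_le : sin (t / 2) ^+ 2 <= (t / 2) ^+ 2.
  rewrite -[sin _ ^+ 2]real_normK ?num_real // -[X in _ <= X]real_normK ?num_real //.
  by rewrite ler_sqr ?nnegrE // normr_sin_le.
rewrite one_sub_cos (le_trans (ler_wMn2r 2 sin_le)) // expr_div_n.
have := sqr_ge0 t; lra.
Qed.

Lemma cos_eq1_not_small t : cos t = 1 -> ~~ ((0 < `|t|) && (`|t| < 1)).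
Proof.
move=> ct; have /eqP : sin (`|t| / 2) ^+ 2 *+ 2 = 0.
  by rewrite -one_sub_cos cos_norm ct subrr.
rewrite mulrn_eq0 /= sqrf_eq0; apply: contraL => /andP[t0 t1]; rewrite gt_eqF // sin_gt0_pi //.
rewrite divr_gt0 //=; apply: (@lt_le_trans _ _ 2); [lra|exact: pi_ge2].
Qed.

End trigonometry.

Section measure_facts.
Context (d : measure_display) (T : measurableType d) (R : realType).
Variable mu : {measure set T -> \bar R}.

Lemma measurable_fun_natr_bool (P : T -> bool) :
  measurable_fun setT P -> measurable_fun setT (fun z => (P z)%:R : R).
Proof.
move=> mP; rewrite (_ : (fun z => _) = fun z => if P z then 1 else 0).
  by apply: measurable_fun_ifT => //; exact: measurable_cst.
by apply/funext => z; case: (P z).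
Qed.

(* No integrability needed: when an integral is infinite, [fine] sends both sides to [0]. *)
Lemma RintegralN (D : set T) (f : T -> R) :
  Rintegral mu D (fun z => - f z) = - Rintegral mu D f.
Proof.
rewrite /Rintegral; under eq_integral do rewrite EFinN.
rewrite integralE [in RHS]integralE.
rewrite (_ : (fun z => - (f z)%:E)%E = \- (EFin \o f))%E // funeposN funenegN.
by case: (\int[mu]_(x in D) _)%E => [a| |]; case: (\int[mu]_(x in D) _)%E => [b| |];
  rewrite //= ?opprB ?oppr0.
Qed.

Lemma Rintegral_eq0_ae (D : set T) (f : T -> R) : measurable D ->
  measurable_fun D f -> (forall z, D z -> 0 <= f z) ->
  (\int[mu]_(z in D) (f z)%:E < +oo)%E ->
  Rintegral mu D f = 0 -> ae_eq mu D (EFin \o f) (cst 0%E).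
Proof.
move=> mD mf f0 f_fin f_eq0.
have int_ge0 : (0 <= \int[mu]_(z in D) (f z)%:E)%E.
  by apply: integral_ge0 => z Dz; rewrite lee_fin f0.
apply/(ae_eq_integral_abs mu mD); first exact/measurable_EFinP.
rewrite (eq_integral (fun z => (f z)%:E)); last first.
  by move=> z /[!inE] Dz; rewrite /= ger0_norm ?f0.
by rewrite -[LHS]fineK ?ge0_fin_numE // -/(Rintegral mu D f) f_eq0.
Qed.

End measure_facts.

Section measurable_vec.
Variables (R : realType) (k : nat).
Local Notation V := (vecR R k).

Lemma continuous_vec_measurable (f : 'rV[R]_k -> R) :
  continuous f -> measurable_fun setT (f : V -> R).
Proof.
move=> cf; apply: (measurability _ (RGenOInfty.measurableE R)).
move=> /= _ [_ [a ->] <-]; rewrite setTI; apply: sub_sigma_algebra.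
apply: open_comp; first by move=> y _; exact: cf.
exact: itv_open_ends_open.
Qed.

Lemma measurable_dotRr (x : 'rV[R]_k) : measurable_fun setT (fun z : V => dotR z x).
Proof.
apply: measurable_sum => i; apply: measurable_funM; last exact: measurable_cst.
by apply: continuous_vec_measurable; exact: coord_continuous.
Qed.

Lemma measurable_enorm : measurable_fun setT (@enorm R k : V -> R).
Proof.
apply: measurableT_comp (continuous_measurable_fun (@sqrt_continuous R)) _.
by apply: measurable_sum => i; apply: measurable_funM;
  apply: continuous_vec_measurable; exact: coord_continuous.
Qed.

Lemma measurable_small_jumps : measurable (@small_jumps R k).
Proof.
have -> : @small_jumps R k = (@enorm R k : V -> R) @^-1` `]0, 1[.
  by apply/seteqP; split => z; rewrite /= in_itv.
by rewrite -[X in measurable X]setTI; exact: measurable_enorm.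
Qed.

Lemma measurable_big_jumps : measurable (@big_jumps R k).
Proof.
have -> : @big_jumps R k = (@enorm R k : V -> R) @^-1` `[1, +oo[.
  by apply/seteqP; split => z; rewrite /= in_itv /= andbT.
by rewrite -[X in measurable X]setTI; exact: measurable_enorm.
Qed.

End measurable_vec.

Section characteristic_exponent.
Variables (R : realType) (k : nat) (b : 'rV[R]_k) (Q : 'M[R]_k).
Variable nu : {measure set (vecR R k) -> \bar R}.
Hypothesis levy_bnu : levy_triplet b Q nu.
Variable x : 'rV[R]_k.
Local Notation V := (vecR R k).
(* Instance search does not find this filter on its own. *)
#[local] Instance ae_nu_filter : Filter (almost_everywhere nu) :=
  ae_filter_ringOfSetsType nu.

Lemma one_sub_cos_dotR_le (z : 'rV[R]_k) :
  1 - cos (dotR z x) <= (2 + dotR x x) * Num.min 1 (enorm z ^+ 2).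
Proof.
have := dotRR_ge0 x; have := cos_geN1 (dotR z x).
have [le1|lt1] := leP 1 (enorm z ^+ 2); first lra.
rewrite enorm_sqr.
have := one_sub_cos_le_sqr (dotR z x); have := dotR_sqr_le x z.
have := dotRR_ge0 z; nra.
Qed.

Let measurable_one_sub_cos : measurable_fun setT (fun z : V => 1 - cos (dotR z x)).
Proof.
apply: measurable_funB; first exact: measurable_cst.
exact: measurableT_comp (continuous_measurable_fun (@continuous_cos R)) (measurable_dotRr x).
Qed.

Lemma integral_one_sub_cos_lty (D : set V) : measurable D ->
  (\int[nu]_(z in D) (1 - cos (dotR z x))%:E < +oo)%E.
Proof.
move=> mD; have [_ _ _ min_fin] := levy_bnu.
set m := fun z : V => Num.min 1 (enorm z ^+ 2).
have m_ge0 z : 0 <= m z by rewrite le_min ler01 sqr_ge0.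
have C_ge0 : 0 <= 2 + dotR x x by have := dotRR_ge0 x; lra.
have mm : measurable_fun setT m.
  by apply: measurable_minr; [exact: measurable_cst|exact: measurable_funX (@measurable_enorm R k)].
apply: (@le_lt_trans _ _ (\int[nu]_(z in D) ((2 + dotR x x) * m z)%:E)%E).
  apply: ge0_le_integral => //.
  - by apply/measurable_EFinP; exact: measurable_funS measurable_one_sub_cos.
  - by apply/measurable_EFinP; exact: measurable_funS (measurable_funM (measurable_cst _) mm).
  - by move=> z _; rewrite lee_fin one_sub_cos_dotR_le.
apply: (@le_lt_trans _ _ (\int[nu]_(z in setT) ((2 + dotR x x) * m z)%:E)%E).
  by apply: ge0_subset_integral => // [|z _]; [exact/measurable_EFinP/measurable_funM|
    rewrite lee_fin mulr_ge0].
under eq_integral do rewrite EFinM.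
rewrite ge0_integralZl_EFin //; first exact: lte_mul_pinfty.
- by move=> z _; rewrite lee_fin.
- exact/measurable_EFinP.
Qed.

Lemma char_exp_Re_ge0 : 0 <= complex.Re (char_exp b Q nu x).
Proof.
have [_ Q_psd _ _] := levy_bnu.
rewrite /char_exp /=; apply: addr_ge0; first apply: addr_ge0.
- by rewrite mulr_ge0 ?invr_ge0 ?ler0n ?Q_psd.
- by apply: Rintegral_ge0 => z _; rewrite subr_ge0 cos_le1.
- by apply: Rintegral_ge0 => z _; rewrite subr_ge0 cos_le1.
Qed.

Lemma ae_small_big_jumps : \forall z \ae nu, (@small_jumps R k `|` @big_jumps R k) z.
Proof.
have [_ _ nu0 _] := levy_bnu.
exists [set 0]; rewrite small_big_jumpsU setCK; split => //.
rewrite -[[set 0]]setCK -small_big_jumpsU.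
by apply/measurableC/measurableU; [exact: measurable_small_jumps|exact: measurable_big_jumps].
Qed.

Lemma char_exp_Re_eq0_ae : complex.Re (char_exp b Q nu x) = 0 ->
  \forall z \ae nu, cos (dotR z x) = 1.
Proof.
have [_ Q_psd _ _] := levy_bnu.
set h := fun z : V => 1 - cos (dotR z x).
have h_ge0 z : 0 <= h z by rewrite subr_ge0 cos_le1.
have ae_h0 D : measurable D -> Rintegral nu D h = 0 -> ae_eq nu D (EFin \o h) (cst 0%E).
  move=> mD; apply: Rintegral_eq0_ae => //; last exact: integral_one_sub_cos_lty.
  exact: measurable_funS measurable_one_sub_cos.
have q_ge0 : 0 <= 2^-1 * dotR x (x *m Q) by rewrite mulr_ge0 ?invr_ge0 ?ler0n ?Q_psd.
have := Rintegral_ge0 nu (D := @small_jumps R k) (f := h) (fun z _ => h_ge0 z).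
have := Rintegral_ge0 nu (D := @big_jumps R k) (f := h) (fun z _ => h_ge0 z).
rewrite /char_exp /= -/h => IB_ge0 IS_ge0 Re0.
have IS0 : Rintegral nu (@small_jumps R k) h = 0 by lra.
have IB0 : Rintegral nu (@big_jumps R k) h = 0 by lra.
have aeS := ae_h0 _ (@measurable_small_jumps R k) IS0.
have aeB := ae_h0 _ (@measurable_big_jumps R k) IB0.
apply: filterS3 aeS aeB ae_small_big_jumps.
move=> z hS hB /= zSB; suff : h z = 0 by rewrite /h; lra.
by case: zSB => [/hS|/hB] [].
Qed.

Section cos_dotR_ae_eq1.
Hypothesis cos_ae : \forall z \ae nu, cos (dotR z x) = 1.

Let sin_ae : \forall z \ae nu, sin (dotR z x) = 0.
Proof. by apply: filterS cos_ae => z cz; rewrite cos1sin0 // cz normr1. Qed.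

Let measurable_sin_dotR : measurable_fun setT (fun z : V => sin (dotR z x)).
Proof.
exact: measurableT_comp (continuous_measurable_fun (@continuous_sin R)) (measurable_dotRr x).
Qed.

Lemma Rintegral_small_jumps_sub_sin :
  Rintegral nu (@small_jumps R k) (fun z => dotR z x - sin (dotR z x)) =
  Rintegral nu (@small_jumps R k) (fun z => dotR z x).
Proof.
congr fine; apply: ae_eq_integral; first exact: measurable_small_jumps.
- apply/measurable_EFinP; apply: measurable_funS (measurable_funB _ measurable_sin_dotR) => //.
  exact: measurable_dotRr.
- by apply/measurable_EFinP; apply: measurable_funS (measurable_dotRr x).
- by apply: filterS sin_ae => z sz _; rewrite /= sz subr0.
Qed.

Lemma Rintegral_big_jumps_sin :
  Rintegral nu (@big_jumps R k) (fun z => sin (dotR z x)) = 0.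
Proof.
rewrite /Rintegral (ae_eq_integral (cst 0%E)) ?integral0 //.
- exact: measurable_big_jumps.
- by apply/measurable_EFinP; exact: measurable_funS measurable_sin_dotR.
- by apply: filterS sin_ae => z sz _; rewrite /= sz.
Qed.

Lemma Rintegral_drift_correction :
  Rintegral nu setT (fun z : V => dotR x z *
    (((0 < `|dotR x z|) && (`|dotR x z| < 1))%:R - ((0 < enorm z) && (enorm z < 1))%:R)) =
  - Rintegral nu (@small_jumps R k) (fun z => dotR z x).
Proof.
have mxz : measurable_fun setT (fun z : V => dotR x z).
  by under eq_fun do rewrite dotRC; exact: measurable_dotRr.
have m_small_dir : measurable_fun setT (fun z : V => (0 < `|dotR x z|) && (`|dotR x z| < 1)).
  have m_norm := measurableT_comp (@normr_measurable R setT) mxz.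
  by apply: measurable_and; apply: measurable_fun_ltr => //; exact: measurable_cst.
have m_small : measurable_fun setT (fun z : V => (0 < enorm z) && (enorm z < 1)).
  have m_enorm := @measurable_enorm R k.
  by apply: measurable_and; apply: measurable_fun_ltr => //; exact: measurable_cst.
rewrite (Rintegral_mkcond _ (@small_jumps R k)) -RintegralN; congr fine.
apply: ae_eq_integral => //.
- apply/measurable_EFinP; apply: measurable_funM => //.
  by apply: measurable_funB; exact: measurable_fun_natr_bool.
- apply/measurable_EFinP/measurable_funN/(measurable_restrictT _ (@measurable_small_jumps R k)).
  exact: measurable_funS (measurable_dotRr x).
- apply: filterS cos_ae => z /cos_eq1_not_small; rewrite dotRC => /negbTE -> _.
  rewrite patchE; case: ifPn => [|zS]; first by rewrite inE /= => ->; rewrite sub0r mulrN1 dotRC.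
  have -> : (0 < enorm z) && (enorm z < 1) = false by apply/negbTE; apply: contra zS; exact: mem_set.
  by rewrite subrr mulr0 oppr0.
Qed.

Lemma char_exp_Im : complex.Im (char_exp b Q nu x) = - drift_dir b nu x.
Proof.
rewrite /char_exp /drift_dir /= Rintegral_small_jumps_sub_sin Rintegral_big_jumps_sin.
by rewrite Rintegral_drift_correction dotRC subr0 opprD opprK.
Qed.

End cos_dotR_ae_eq1.

End characteristic_exponent.

Lemma complex_add_eq0_Re_ge0 (R : rcfType) (u v : complex.complex R) :
  0 <= complex.Re u -> 0 <= complex.Re v ->
  u + v = 0 <-> [/\ complex.Re u = 0, complex.Re v = 0 & complex.Im u + complex.Im v = 0].
Proof.
case: u v => [a1 c1] [a2 c2] /= a1_ge0 a2_ge0; split.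
  by case=> a_eq0 c_eq0; split; lra.
case=> -> -> c_eq0; apply/eqP; rewrite eq_complex /=; apply/andP; split; apply/eqP; lra.
Qed.

Unset Implicit Arguments.

Theorem lemma5p3 (R : realType) (n d : nat)
  (b1 : 'rV[R]_d) (Q1 : 'M[R]_d) (nu1 : {measure set (vecR R d) -> \bar R})
  (b2 : 'rV[R]_n) (Q2 : 'M[R]_n) (nu2 : {measure set (vecR R n) -> \bar R}) :
  levy_triplet b1 Q1 nu1 -> levy_triplet b2 Q2 nu2 ->
  [set xy : 'rV[R]_d * 'rV[R]_n |
     char_exp b1 Q1 nu1 xy.1 + char_exp b2 Q2 nu2 xy.2 = 0] =
  [set xy : 'rV[R]_d * 'rV[R]_n |
     [/\ complex.Re (char_exp b1 Q1 nu1 xy.1) = 0,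
         complex.Re (char_exp b2 Q2 nu2 xy.2) = 0 &
         drift_dir b1 nu1 xy.1 + drift_dir b2 nu2 xy.2 = 0]].
Proof.
move=> levy1 levy2; apply/funext => -[x y] /=; apply/propext.
rewrite complex_add_eq0_Re_ge0 ?char_exp_Re_ge0 //.
split=> -[Re1 Re2]; rewrite (char_exp_Im b1 Q1 (char_exp_Re_eq0_ae levy1 Re1))
  (char_exp_Im b2 Q2 (char_exp_Re_eq0_ae levy2 Re2)) => sum0; split=> //; lra.
Qed.
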